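(* Suppose that, after a permutation of its columns, $A=[A^{(1)},\dots,A^{(k)}]$ where each $A^{(i)}\in\mathbb{R}^{n\times m_i}$ is a submatrix of $A$ and $\mathrm{New}(A^{(1)}),\dots,\mathrm{New}(A^{(k)})$ are mutually disjoint faces of $\mathrm{New}(A)$. Then (with coordinates of $\mathbb{R}^m$ grouped accordingly) $C_{\mathrm{NNS}}(A)=C_{\mathrm{NNS}}(A^{(1)})\times\cdots\times C_{\mathrm{NNS}}(A^{(k)})$ and $C_{\mathrm{SAGE}}(A)=C_{\mathrm{SAGE}}(A^{(1)})\times\cdots\times C_{\mathrm{SAGE}}(A^{(k)})$.
   Context: Let $A\in\mathbb{R}^{n\times m}$ have distinct columns $a_1,\dots,a_m$. For $c\in\mathbb{R}^m$, $\mathrm{Sig}(A,c)$ denotes the function $x\mapsto\sum_{i=1}^m c_i\exp(a_i^\top x)$ on $\mathbb{R}^n$. $\mathrm{New}(A)=\mathrm{conv}\{a_1,\dots,a_m\}$ is the Newton polytope. $C_{\mathrm{NNS}}(A)=\{c\in\mathbb{R}^m:\mathrm{Sig}(A,c)(x)\ge 0\ \forall x\in\mathbb{R}^n\}$. For $k\in[m]$, the $k$-th AGE cone is $C_{\mathrm{AGE}}(A,k)=\{c\in C_{\mathrm{NNS}}(A): c_i\ge 0\ \forall i\ne k\}$, and the SAGE cone is the Minkowski sum $C_{\mathrm{SAGE}}(A)=\sum_{k=1}^m C_{\mathrm{AGE}}(A,k)$. These definitions apply equally to any submatrix of $A$. *)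

From Stdlib Require Import Reals List Arith.
Import ListNotations.
Open Scope R_scope.

(* Vectors of R^n are represented by functions nat -> R, of which only the
   coordinates 0..n-1 are ever used. *)
Definition vec := nat -> R.

Definition lsum (l : list nat) (f : nat -> R) : R :=
  fold_right (fun i acc => f i + acc) 0 l.

Definition dot (n : nat) (x y : vec) : R := lsum (seq 0 n) (fun r => x r * y r).

(* The matrix A in R^{n x m} is given by its columns A 0, ..., A (m-1).
   A submatrix is given by a list S of column indices; coefficient vectors
   c for the submatrix are functions nat -> R of which only the entries
   indexed by S matter. *)
Definition cols (m : nat) : list nat := seq 0 m.

Definition distinct_cols (n m : nat) (A : nat -> vec) : Prop :=
  forall i j, (i < m)%nat -> (j < m)%nat -> i <> j ->
    exists r, (r < n)%nat /\ A i r <> A j r.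

Definition Sig (n : nat) (A : nat -> vec) (S : list nat) (c : vec) (x : vec) : R :=
  lsum S (fun i => c i * exp (dot n (A i) x)).

Definition NNS (n : nat) (A : nat -> vec) (S : list nat) (c : vec) : Prop :=
  forall x : vec, 0 <= Sig n A S c x.

Definition AGE (n : nat) (A : nat -> vec) (S : list nat) (k : nat) (c : vec) : Prop :=
  NNS n A S c /\ (forall i, In i S -> i <> k -> 0 <= c i).

Definition SAGE (n : nat) (A : nat -> vec) (S : list nat) (c : vec) : Prop :=
  exists C : nat -> vec,
    (forall k, In k S -> AGE n A S k (C k)) /\
    (forall i, In i S -> c i = lsum S (fun k => C k i)).

(* Newton polytope New(A_S) = conv{a_i : i in S}, as a subset of R^n
   (only coordinates < n are constrained). *)
Definition New (n : nat) (A : nat -> vec) (S : list nat) (x : vec) : Prop :=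
  exists lam : nat -> R,
    (forall i, In i S -> 0 <= lam i) /\ lsum S lam = 1 /\
    (forall r, (r < n)%nat -> x r = lsum S (fun i => lam i * A i r)).

Definition is_face (n : nat) (F P : vec -> Prop) : Prop :=
  exists (w : vec) (b : R),
    (forall x, P x -> dot n w x <= b) /\
    (forall x, F x <-> (P x /\ dot n w x = b)).

Definition disjoint (F G : vec -> Prop) : Prop := forall x, ~ (F x /\ G x).

(* The i-th block of columns, for a block assignment g : [m] -> [k]. *)
Definition block (m : nat) (g : nat -> nat) (i : nat) : list nat :=
  filter (fun j => Nat.eqb (g j) i) (seq 0 m).

(* Let [w.y <= b] be the supporting hyperplane of the face New(A^(i)).  Translating [x] by [t w]
   multiplies the term of column [j] in Sig(A,c) by [exp (t (a_j.w))]; after dividing by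
   [exp (t b)] the terms of block [i] are unchanged while all other terms decay, because
   disjointness of the faces keeps every other column strictly below the hyperplane.  Hence
   nonnegativity of Sig(A,c) passes to Sig(A^(i),c); the converse holds since Sig(A,c) is the
   sum of the block signomials.  For SAGE, an AGE certificate of the whole matrix restricts to
   a block once the (nonnegative) mass it carries on the other blocks is moved onto the
   diagonal; conversely, block certificates glue by extending them by zero. *)
From Stdlib Require Import Reals List Lra Lia.
Open Scope R_scope.

Lemma lsum_ext l f h : (forall i, In i l -> f i = h i) -> lsum l f = lsum l h.
Proof.
  induction l as [|a l IH]; intros H; simpl; auto.
  rewrite (H a (or_introl eq_refl)), IH; auto.
  intros; apply H; simpl; auto.
Qed.

Lemma lsum_plus l f h : lsum l (fun i => f i + h i) = lsum l f + lsum l h.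
Proof. induction l as [|a l IH]; simpl; [lra|rewrite IH; lra]. Qed.

Lemma lsum_eq0 l f : (forall i, In i l -> f i = 0) -> lsum l f = 0.
Proof.
  induction l as [|a l IH]; intros H; simpl; [reflexivity|].
  rewrite (H a (or_introl eq_refl)), IH; [lra|].
  intros; apply H; simpl; auto.
Qed.

Lemma lsum_nonneg l f : (forall i, In i l -> 0 <= f i) -> 0 <= lsum l f.
Proof.
  induction l as [|a l IH]; intros H; simpl; [lra|].
  assert (0 <= f a) by (apply H; simpl; auto).
  assert (0 <= lsum l f) by (apply IH; intros; apply H; simpl; auto).
  lra.
Qed.

Lemma lsum_mulr l f r : lsum l f * r = lsum l (fun i => f i * r).
Proof. induction l as [|a l IH]; simpl; [lra|rewrite <- IH; lra]. Qed.

Lemma lsum_mull l f r : r * lsum l f = lsum l (fun i => r * f i).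
Proof. induction l as [|a l IH]; simpl; [lra|rewrite <- IH; lra]. Qed.

Lemma lsum_filter (p : nat -> bool) l f :
  lsum (filter p l) f = lsum l (fun i => if p i then f i else 0).
Proof. induction l as [|a l IH]; simpl; [lra|destruct (p a); simpl; rewrite IH; lra]. Qed.

Lemma lsum_filter_split (p : nat -> bool) l f :
  lsum l f = lsum (filter p l) f + lsum (filter (fun j => negb (p j)) l) f.
Proof. induction l as [|a l IH]; simpl; [lra|destruct (p a); simpl; rewrite IH; lra]. Qed.

Lemma lsum_delta l j h : NoDup l -> In j l ->
  lsum l (fun i => if Nat.eqb i j then h else 0) = h.
Proof.
  induction l as [|a l IH]; intros Hnd Hj; [destruct Hj|].
  inversion Hnd as [|? ? Ha Hnd']; subst; simpl.
  destruct (Nat.eqb_spec a j) as [->|Hne].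
  - rewrite lsum_eq0; [lra|].
    intros i Hi; destruct (Nat.eqb_spec i j); [subst; contradiction|reflexivity].
  - destruct Hj as [->|Hj]; [contradiction|]. rewrite IH; auto; lra.
Qed.

Lemma lsum_blocks (g : nat -> nat) k l f :
  (forall j, In j l -> (g j < k)%nat) ->
  lsum l f = lsum (seq 0 k) (fun i => lsum (filter (fun j => Nat.eqb (g j) i) l) f).
Proof.
  induction l as [|a l IH]; intros Hg; simpl.
  - symmetry; apply lsum_eq0; reflexivity.
  - rewrite IH by (intros; apply Hg; simpl; auto).
    assert (Hga : In (g a) (seq 0 k)) by (apply in_seq; specialize (Hg a (or_introl eq_refl)); lia).
    rewrite <- (lsum_delta (seq 0 k) (g a) (f a) (seq_NoDup k 0) Hga) at 1.
    rewrite <- lsum_plus. apply lsum_ext; intros i _.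
    rewrite Nat.eqb_sym. destruct (Nat.eqb (g a) i); simpl; lra.
Qed.

Lemma finite_choice {T : Type} (P : nat -> T -> Prop) (t0 : T) k :
  (forall i, (i < k)%nat -> exists t, P i t) ->
  exists F : nat -> T, forall i, (i < k)%nat -> P i (F i).
Proof.
  induction k as [|k IH]; intros H.
  - exists (fun _ => t0); intros; lia.
  - destruct IH as [F HF]; [intros; apply H; lia|].
    destruct (H k ltac:(lia)) as [t Ht].
    exists (fun i => if Nat.eqb i k then t else F i); intros i Hi.
    destruct (Nat.eqb_spec i k); [subst; auto|apply HF; lia].
Qed.

Lemma dot_comm n x y : dot n x y = dot n y x.
Proof. apply lsum_ext; intros; lra. Qed.

Lemma dot_translate n a x t w :
  dot n a (fun r => x r + t * w r) = dot n a x + t * dot n a w.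
Proof. unfold dot. rewrite lsum_mull, <- lsum_plus. apply lsum_ext; intros; lra. Qed.

Lemma lsum_exp_neg_small l (u d : nat -> R) :
  (forall j, In j l -> d j < 0) ->
  forall eps, 0 < eps -> exists T, forall t, T <= t ->
    Rabs (lsum l (fun j => u j * exp (t * d j))) < eps.
Proof.
  induction l as [|a l IH]; intros Hd eps Heps.
  - exists 0; intros; simpl; rewrite Rabs_R0; lra.
  - destruct (IH (fun j Hj => Hd j (or_intror Hj)) (eps / 2)) as [T1 HT1]; [lra|].
    set (e := eps / (2 * (Rabs (u a) + 1))).
    assert (Hu : 0 <= Rabs (u a)) by apply Rabs_pos.
    assert (He : 0 < e) by (unfold e; apply Rdiv_lt_0_compat; lra).
    assert (Hda : d a < 0) by (apply Hd; simpl; auto).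
    exists (Rmax T1 (ln e / d a)); intros t Ht.
    assert (Ht1 : T1 <= t) by (eapply Rle_trans; [apply Rmax_l|exact Ht]).
    assert (Ht2 : ln e / d a <= t) by (eapply Rle_trans; [apply Rmax_r|exact Ht]).
    assert (Hexp : exp (t * d a) <= e).
    { assert (Htd : t * d a <= ln e).
      { replace (ln e) with ((ln e / d a) * d a) by (field; lra). nra. }
      rewrite <- (exp_ln e) by lra.
      destruct (Rle_lt_or_eq_dec _ _ Htd) as [Hlt|Heq]; [left; apply exp_increasing, Hlt|].
      rewrite Heq; lra. }
    assert (Hsmall : Rabs (u a) * e < eps / 2).
    { unfold e. apply (Rmult_lt_reg_r (2 * (Rabs (u a) + 1))); [lra|].
      field_simplify; [nra|lra]. }
    specialize (HT1 t Ht1). simpl.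
    eapply Rle_lt_trans; [apply Rabs_triang|].
    rewrite Rabs_mult, (Rabs_right (exp _)) by (left; apply exp_pos).
    assert (Rabs (u a) * exp (t * d a) <= Rabs (u a) * e) by (apply Rmult_le_compat_l; lra).
    lra.
Qed.

Lemma Sig_plus n A l c1 c2 x :
  Sig n A l (fun j => c1 j + c2 j) x = Sig n A l c1 x + Sig n A l c2 x.
Proof. unfold Sig. rewrite <- lsum_plus. apply lsum_ext; intros; ring. Qed.

Lemma Sig_filter n A (p : nat -> bool) l c x :
  Sig n A (filter p l) c x = Sig n A l (fun j => if p j then c j else 0) x.
Proof. unfold Sig. rewrite lsum_filter. apply lsum_ext; intros j _; destruct (p j); ring. Qed.

Lemma Sig_translate n A l c x w t b :
  Sig n A l c (fun r => x r + t * w r) * exp (- (t * b)) =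
  lsum l (fun j => c j * exp (dot n (A j) x) * exp (t * (dot n (A j) w - b))).
Proof.
  unfold Sig. rewrite lsum_mulr. apply lsum_ext; intros j _.
  rewrite dot_translate, !Rmult_assoc, <- !exp_plus. do 2 f_equal. ring.
Qed.

Lemma NNS_plus n A l c1 c2 :
  NNS n A l c1 -> NNS n A l c2 -> NNS n A l (fun j => c1 j + c2 j).
Proof.
  intros H1 H2 x. rewrite Sig_plus.
  apply Rplus_le_le_0_compat; [apply H1|apply H2].
Qed.

Lemma NNS_nonneg n A l c : (forall j, In j l -> 0 <= c j) -> NNS n A l c.
Proof.
  intros Hc x. apply lsum_nonneg; intros j Hj.
  apply Rmult_le_pos; [apply Hc, Hj|left; apply exp_pos].
Qed.

Lemma NNS_filter_exposed n A l (p : nat -> bool) (w : vec) (b : R) c :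
  (forall j, In j l -> p j = true -> dot n (A j) w = b) ->
  (forall j, In j l -> p j = false -> dot n (A j) w < b) ->
  NNS n A l c -> NNS n A (filter p l) c.
Proof.
  intros Hon Hoff Hc x.
  set (u := fun j => c j * exp (dot n (A j) x)).
  set (d := fun j => dot n (A j) w - b).
  set (off := filter (fun j => negb (p j)) l).
  assert (Hshift : forall t, Sig n A l c (fun r => x r + t * w r) * exp (- (t * b)) =
            Sig n A (filter p l) c x + lsum off (fun j => u j * exp (t * d j))).
  { intros t. rewrite Sig_translate, (lsum_filter_split p). f_equal.
    apply lsum_ext; intros j Hj. apply filter_In in Hj as [Hj Hp].
    unfold d; rewrite (Hon j Hj Hp), Rminus_diag, Rmult_0_r, exp_0. ring. }
  assert (Hdecay : forall j, In j off -> d j < 0).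
  { intros j Hj. apply filter_In in Hj as [Hj Hp].
    apply Bool.negb_true_iff in Hp. unfold d. specialize (Hoff j Hj Hp). lra. }
  destruct (Rle_lt_dec 0 (Sig n A (filter p l) c x)) as [Hge|Hneg]; [exact Hge|exfalso].
  destruct (lsum_exp_neg_small off u d Hdecay (- Sig n A (filter p l) c x)) as [T HT]; [lra|].
  destruct (Rabs_def2 _ _ (HT T (Rle_refl T))) as [Hsmall _].
  assert (Hpos : 0 <= Sig n A l c (fun r => x r + T * w r) * exp (- (T * b))).
  { apply Rmult_le_pos; [apply Hc|left; apply exp_pos]. }
  rewrite Hshift in Hpos. lra.
Qed.

Lemma NNS_of_blocks n A l (g : nat -> nat) k c :
  (forall j, In j l -> (g j < k)%nat) ->
  (forall i, (i < k)%nat -> NNS n A (filter (fun j => Nat.eqb (g j) i) l) c) ->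
  NNS n A l c.
Proof.
  intros Hg Hblocks x. unfold Sig. rewrite (lsum_blocks g k l) by exact Hg.
  apply lsum_nonneg; intros i Hi. apply in_seq in Hi. apply Hblocks. lia.
Qed.

(* The mass an AGE certificate of [l] puts on coordinates outside [filter p l] is
   nonnegative, so moving it onto the diagonal keeps the certificate valid for [filter p l]. *)
Lemma SAGE_filter n A l (p : nat -> bool) c :
  NoDup l ->
  (forall c', NNS n A l c' -> NNS n A (filter p l) c') ->
  SAGE n A l c -> SAGE n A (filter p l) c.
Proof.
  intros Hnd Hrestrict [C [HAGE Hsum]].
  set (off := filter (fun j => negb (p j)) l).
  set (D := fun j => lsum off (fun k => C k j)).
  assert (HD : forall j, In j (filter p l) -> 0 <= D j).
  { intros j Hj. apply filter_In in Hj as [Hj Hpj].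
    apply lsum_nonneg; intros k Hk. apply filter_In in Hk as [Hk Hpk].
    apply (proj2 (HAGE k Hk)); [exact Hj|].
    intros ->. rewrite Hpj in Hpk. discriminate. }
  exists (fun k j => C k j + (if Nat.eqb k j then D j else 0)). split.
  - intros k Hk. apply filter_In in Hk as [Hk _]. split.
    + apply NNS_plus; [apply Hrestrict, (HAGE k Hk)|].
      apply NNS_nonneg; intros j Hj.
      destruct (Nat.eqb_spec k j); [subst; apply HD, Hj|lra].
    + intros j Hj Hne. apply Rplus_le_le_0_compat.
      * apply (proj2 (HAGE k Hk)); [apply filter_In in Hj as [Hj _]; exact Hj|exact Hne].
      * destruct (Nat.eqb_spec k j); [congruence|lra].
  - intros j Hj. rewrite lsum_plus, lsum_delta; [|apply NoDup_filter, Hnd|exact Hj].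
    rewrite (Hsum j (proj1 (proj1 (filter_In _ _ _) Hj))).
    apply lsum_filter_split.
Qed.

Lemma SAGE_of_blocks n A l (g : nat -> nat) k c :
  (forall j, In j l -> (g j < k)%nat) ->
  (forall i, (i < k)%nat -> SAGE n A (filter (fun j => Nat.eqb (g j) i) l) c) ->
  SAGE n A l c.
Proof.
  intros Hg Hblocks.
  destruct (finite_choice _ (fun _ _ => 0) k Hblocks) as [Cb HCb].
  exists (fun k' j => if Nat.eqb (g j) (g k') then Cb (g k') k' j else 0). split.
  - intros k' Hk'.
    assert (Hblock : In k' (filter (fun j => Nat.eqb (g j) (g k')) l))
      by (apply filter_In; split; [exact Hk'|apply Nat.eqb_refl]).
    destruct (HCb (g k') (Hg k' Hk')) as [HAGE _].
    destruct (HAGE k' Hblock) as [HNNS Hcoef]. split.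
    + intros x. rewrite <- Sig_filter. apply HNNS.
    + intros j Hj Hne. destruct (Nat.eqb (g j) (g k')) eqn:E; [|lra].
      apply Hcoef; [apply filter_In; auto|exact Hne].
  - intros j Hj.
    assert (Hblock : In j (filter (fun j' => Nat.eqb (g j') (g j)) l))
      by (apply filter_In; split; [exact Hj|apply Nat.eqb_refl]).
    destruct (HCb (g j) (Hg j Hj)) as [_ Hsum].
    rewrite (Hsum j Hblock), lsum_filter. apply lsum_ext; intros k' _.
    destruct (Nat.eqb_spec (g k') (g j)), (Nat.eqb_spec (g j) (g k')); congruence.
Qed.

Lemma New_col n A l j : NoDup l -> In j l -> New n A l (A j).
Proof.
  intros Hnd Hj. exists (fun i => if Nat.eqb i j then 1 else 0). repeat split.
  - intros i _. destruct (Nat.eqb i j); lra.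
  - exact (lsum_delta l j 1 Hnd Hj).
  - intros r _. rewrite <- (lsum_delta l j (A j r) Hnd Hj) at 1.
    apply lsum_ext; intros i _. destruct (Nat.eqb_spec i j); [subst|]; ring.
Qed.

Lemma In_block m g i j : In j (block m g i) <-> (j < m)%nat /\ g j = i.
Proof. unfold block. rewrite filter_In, in_seq, Nat.eqb_eq. lia. Qed.

Lemma block_exposed n m k A g
  (Hg : forall j, (j < m)%nat -> (g j < k)%nat)
  (Hdisj : forall i j, (i < k)%nat -> (j < k)%nat -> i <> j ->
     disjoint (New n A (block m g i)) (New n A (block m g j)))
  i (Hi : (i < k)%nat) :
  is_face n (New n A (block m g i)) (New n A (cols m)) ->
  exists w b,
    (forall j, In j (cols m) -> Nat.eqb (g j) i = true -> dot n (A j) w = b) /\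
    (forall j, In j (cols m) -> Nat.eqb (g j) i = false -> dot n (A j) w < b).
Proof.
  intros (w & b & Hle & Hface). exists w, b.
  assert (Hcol : forall j i', In j (block m g i') -> New n A (block m g i') (A j))
    by (intros; apply New_col; [apply NoDup_filter, seq_NoDup|assumption]).
  split.
  - intros j Hj Hgj. rewrite dot_comm.
    apply (Hface (A j)), Hcol, filter_In; auto.
  - intros j Hj Hgj. apply in_seq in Hj. apply Nat.eqb_neq in Hgj. rewrite dot_comm.
    destruct (Rle_lt_or_eq_dec _ _ (Hle (A j) (New_col n A _ j (seq_NoDup m 0) ltac:(apply in_seq; lia))))
      as [Hlt|Heq]; [exact Hlt|exfalso].
    apply (Hdisj i (g j) Hi (Hg j ltac:(lia)) (not_eq_sym Hgj) (A j)). split.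
    + apply Hface. split; [apply New_col; [apply seq_NoDup|apply in_seq; lia]|exact Heq].
    + apply Hcol, In_block. split; [lia|reflexivity].
Qed.

Theorem mainTheorem9 (n m k : nat) (A : nat -> vec) (g : nat -> nat)
  (Hdist : distinct_cols n m A)
  (Hg : forall j, (j < m)%nat -> (g j < k)%nat)
  (Hface : forall i, (i < k)%nat ->
     is_face n (New n A (block m g i)) (New n A (cols m)))
  (Hdisj : forall i j, (i < k)%nat -> (j < k)%nat -> i <> j ->
     disjoint (New n A (block m g i)) (New n A (block m g j))) :
  (forall c : vec, NNS n A (cols m) c <->
     (forall i, (i < k)%nat -> NNS n A (block m g i) c)) /\
  (forall c : vec, SAGE n A (cols m) c <->
     (forall i, (i < k)%nat -> SAGE n A (block m g i) c)).
Proof.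
  assert (Hrestrict : forall i c, (i < k)%nat ->
            NNS n A (cols m) c -> NNS n A (block m g i) c).
  { intros i c Hi.
    destruct (block_exposed n m k A g Hg Hdisj i Hi (Hface i Hi)) as (w & b & Hon & Hoff).
    exact (NNS_filter_exposed n A (cols m) _ w b c Hon Hoff). }
  assert (Hcols : forall j, In j (cols m) -> (g j < k)%nat)
    by (intros j Hj; apply Hg; apply in_seq in Hj; lia).
  split; intros c; split.
  - intros Hc i Hi. exact (Hrestrict i c Hi Hc).
  - exact (NNS_of_blocks n A (cols m) g k c Hcols).
  - intros Hc i Hi. apply SAGE_filter; [apply seq_NoDup|intros; apply Hrestrict; auto|exact Hc].
  - exact (SAGE_of_blocks n A (cols m) g k c Hcols).
Qed.
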